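(* Let $a\in\mathbb N$, let $\mathfrak o$ be a compact discrete valuation ring with maximal ideal $\mathfrak p$ and residue field cardinality $q$, and $t=q^{-s}$. Let $V_{2,a}(\mathfrak o)$ be the $\mathfrak o$-representation of the star quiver $\mathsf S_a$ in which every vertex is represented by $\mathfrak o^2$ and every arrow by the identity map. Then $$\zeta_{V_{2,a}(\mathfrak o)}(s)=\sum_{r_0=0}^\infty t^{2r_0}\left(\left(\zeta_{(r_0,r_0),\mathfrak o}(s)\right)^{a-1}+(1+q^{-1})\sum_{r_1=1}^\infty(qt)^{r_1}\left(\zeta_{(r_0+r_1,r_0),\mathfrak o}(s)\right)^{a-1}\right).$$
   Context: The star quiver $\mathsf S_a$ has vertices $v_1,\dots,v_a$ and arrows $v_1\to v_j$ for $j=2,\dots,a$. Subrepresentations of a representation $(\mathcal L_\iota,f_\phi)$ are tuples of submodules $\Lambda_\iota\le\mathcal L_\iota$ with $f_\phi(\Lambda_{\mathrm{tail}(\phi)})\subseteq\Lambda_{\mathrm{head}(\phi)}$; $\zeta_V(s)=\sum_{V'}\prod_\iota|\mathcal L_\iota:\Lambda_\iota|^{-s}$ over finite-index subrepresentations. For a partition $\lambda=(\lambda_1,\lambda_2)$, $\zeta_{\lambda,\mathfrak o}(s)=\sum_U|M:U|^{-s}$ is the Dirichlet polynomial enumerating all $\mathfrak o$-submodules $U$ of the finite module $M=\mathfrak o/\mathfrak p^{\lambda_1}\times\mathfrak o/\mathfrak p^{\lambda_2}$. *)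

From HB Require Import structures.
From mathcomp Require Import all_boot all_order all_algebra.
From mathcomp Require Import boolp classical_sets cardinality.
Set Implicit Arguments. Unset Strict Implicit. Unset Printing Implicit Defensive.
Import Order.TTheory GRing.Theory.
Local Open Scope ring_scope.
Local Open Scope classical_set_scope.
Local Open Scope card_scope.

(* Number of elements of a set (the value is only meaningful when the  *)
(* set is finite; it is 0 otherwise).                                  *)
Definition ncard {T} (A : set T) : nat := xget 0%N [set n | A #= `I_n].

Section DVR.
Variable R : idomainType.

Definition dvdR (x y : R) : Prop := exists z, y = x * z.

(* (R, pi) is a compact DVR with uniformizer pi (maximal ideal p = pi R)
   and residue field R/p of cardinality q:
   - pi is nonzero and not a unit, every nonzero element is u * pi^k
     with u a unit (so R is a DVR with maximal ideal pi R);
   - R / pi R has exactly q elements;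
   - R is complete for the pi-adic topology.
   (A DVR is compact iff it is complete with finite residue field.) *)
Definition is_compact_dvr (pi : R) (q : nat) : Prop :=
  [/\ pi != 0, pi \notin GRing.unit,
      (forall x : R, x != 0 ->
         exists (u : R) (k : nat), u \is a GRing.unit /\ x = u * pi ^+ k),
      (exists f : 'I_q -> R,
          (forall x : R, exists i, dvdR pi (x - f i)) /\
          (forall i j, dvdR pi (f i - f j) -> i = j))
    & (forall x : nat -> R, (forall n, dvdR (pi ^+ n) (x n.+1 - x n)) ->
         exists y : R, forall n, dvdR (pi ^+ n) (y - x n))].

Definition submod (U : set (R * R)) : Prop :=
  [/\ U (0, 0),
      (forall x y, U x -> U y -> U (x.1 + y.1, x.2 + y.2))
    & (forall (r : R) x, U x -> U (r * x.1, r * x.2))].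

Definition index_is (U : set (R * R)) (k : nat) : Prop :=
  exists f : 'I_k -> R * R,
    (forall x : R * R, exists i, U (x.1 - (f i).1, x.2 - (f i).2)) /\
    (forall i j, U ((f i).1 - (f j).1, (f i).2 - (f j).2) -> i = j).

(* zeta_{lambda,o}: submodules of M = o/p^l1 x o/p^l2 are identified    *)
(* (correspondence theorem) with the submodules U of o^2 containing     *)
(* the kernel p^l1 o x p^l2 o of o^2 -> M, and |M : U| = |o^2 : U|.      *)
Definition submod_M (pi : R) (l1 l2 : nat) (U : set (R * R)) : Prop :=
  [/\ submod U, (forall x, U (pi ^+ l1 * x, 0)) & (forall y, U (0, pi ^+ l2 * y))].

(* Dirichlet series are represented by their coefficient sequences:
   D(s) = \sum_{N >= 1} D N * N^{-s}. *)
Definition dseries := nat -> rat.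

Definition zeta_lambda (pi : R) (l1 l2 : nat) : dseries :=
  fun N => (ncard [set U | submod_M pi l1 l2 U /\ index_is U N])%:R.

(* The star quiver S_a: vertices v_1..v_a are 'I_a (v_1 = vertex 0),    *)
(* arrows v_1 -> v_j for j = 2..a, encoded as pairs (tail, head).       *)
Definition star_arrows (a : nat) : seq (nat * nat) :=
  [seq (0%N, j) | j <- iota 1 a.-1].

Definition V2a_map (a : nat) (e : nat * nat) : R * R -> R * R := id.

Definition is_subrep_V2a (a : nat) (L : 'I_a -> set (R * R)) : Prop :=
  (forall i, submod (L i)) /\
  (forall i j : 'I_a, ((i : nat), (j : nat)) \in star_arrows a ->
     forall x, L i x -> L j (V2a_map a ((i : nat), (j : nat)) x)).

Definition subreps_of_index (a : nat) (N : nat) : set ('I_a -> set (R * R)) :=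
  [set L | is_subrep_V2a L /\
           exists k : 'I_a -> nat, (forall i, index_is (L i) (k i)) /\
                                   (\prod_(i < a) k i)%N = N].

Definition zeta_V2a (a : nat) : dseries :=
  fun N => (ncard (@subreps_of_index a N))%:R.
End DVR.

Arguments subreps_of_index : clear implicits.
Arguments zeta_V2a : clear implicits.
Arguments is_subrep_V2a : clear implicits.
Arguments zeta_lambda {R} pi l1 l2.

Definition dmul (f g : dseries) : dseries :=
  fun N => \sum_(d < N.+1 | (d %| N)%N) f d * g (N %/ d)%N.
Definition done_ : dseries := fun N => (N == 1%N)%:R.
Definition dpow (f : dseries) (k : nat) : dseries := iter k (dmul f) done_.
Definition dadd (f g : dseries) : dseries := fun N => f N + g N.
Definition dscale (c : rat) (f : dseries) : dseries := fun N => c * f N.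
Definition dmono (c : rat) (m : nat) : dseries := fun N => if N == m then c else 0.
(* t^k = (q^{-s})^k = (q^k)^{-s} *)
Definition tpow (q k : nat) : dseries := dmono 1 (q ^ k)%N.
(* (q t)^k = q^k (q^k)^{-s} *)
Definition qtpow (q k : nat) : dseries := dmono (q ^ k)%N%:R (q ^ k)%N.
(* It is used
   only for families F with F r N = 0 whenever r > N (true below, since
   F r is a multiple of t^r = (q^r)^{-s} and q^r > r for q >= 2), so the
   coefficient of N^{-s} is the finite sum over r0 <= r <= N. *)
Definition dsum_from (r0 : nat) (F : nat -> dseries) : dseries :=
  fun N => \sum_(r0 <= r < N.+1) F r N.

From HB Require Import structures.
From mathcomp Require Import all_boot all_order all_algebra.
From mathcomp Require Import boolp classical_sets cardinality.
From mathcomp Require Import ring zify.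
Import Order.TTheory GRing.Theory Num.Theory.
Set Implicit Arguments. Unset Strict Implicit. Unset Printing Implicit Defensive.
Local Open Scope ring_scope.
Local Open Scope classical_set_scope.
Local Open Scope card_scope.

(* A submodule of o^2 of index k contains p^k o^2, so the subrepresentations
   of index N are tuples of submodules of the finite module (o/p^N)^2, which
   we encode as finite sets of residues.  A subrepresentation of the star
   quiver is a centre L_1 together with a - 1 submodules containing it.  By
   the Smith normal form over o, L_1 = g^-1 (p^(r0+r1) o + p^r0 o) for an
   automorphism g of o^2 and a unique pair (r0, r1); transporting along g, the
   (a-1)-tuples of submodules containing L_1 are counted by
   zeta_{(r0+r1,r0)}^(a-1), and the index of L_1 is q^(2 r0 + r1).  The centres
   of type (r0 + r1, r0) are the points of the projective line over o/p^r1: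
   one if r1 = 0, and q^r1 + q^(r1-1) = (1 + q^-1) q^r1 if r1 > 0. *)

Section Divisibility.
Variable R : idomainType.
Implicit Types x y z : R.

Lemma dvdR_refl x : dvdR x x. Proof. by exists 1; rewrite mulr1. Qed.
Lemma dvdR0 x : dvdR x 0. Proof. by exists 0; rewrite mulr0. Qed.
Lemma dvd1R x : dvdR 1 x. Proof. by exists x; rewrite mul1r. Qed.

Lemma dvdRD x y z : dvdR x y -> dvdR x z -> dvdR x (y + z).
Proof. by move=> [a ->] [b ->]; exists (a + b); rewrite mulrDr. Qed.

Lemma dvdRN x y : dvdR x y -> dvdR x (- y).
Proof. by move=> [a ->]; exists (- a); rewrite mulrN. Qed.

Lemma dvdRB x y z : dvdR x y -> dvdR x z -> dvdR x (y - z).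
Proof. by move=> hy /dvdRN; apply: dvdRD. Qed.

Lemma dvdR_mull x y z : dvdR x y -> dvdR x (z * y).
Proof. by move=> [a ->]; exists (z * a); rewrite mulrCA. Qed.

Lemma dvdR_mulr x y z : dvdR x y -> dvdR x (y * z).
Proof. by rewrite mulrC; apply: dvdR_mull. Qed.

Lemma dvdR_trans x y z : dvdR x y -> dvdR y z -> dvdR x z.
Proof. by move=> [a ->] [b ->]; exists (a * b); rewrite mulrA. Qed.

Lemma dvdR_mul x y z w : dvdR x y -> dvdR z w -> dvdR (x * z) (y * w).
Proof. by move=> [a ->] [b ->]; exists (a * b); ring. Qed.

Lemma dvdR_exp2l x m n : (m <= n)%N -> dvdR (x ^+ m) (x ^+ n).
Proof. by move=> hmn; exists (x ^+ (n - m)); rewrite -exprD subnKC. Qed.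

Lemma dvdR_exp_leq x y m n : (m <= n)%N -> dvdR (x ^+ n) y -> dvdR (x ^+ m) y.
Proof. by move/(dvdR_exp2l x); apply: dvdR_trans. Qed.

Lemma dvdR_mul2l z x y : z != 0 -> dvdR (z * x) (z * y) -> dvdR x y.
Proof. by move=> z0 [a]; rewrite -mulrA => /(mulfI z0) ->; exists a. Qed.

Lemma dvdR_unit_mull u x y : u \is a GRing.unit -> dvdR x (u * y) -> dvdR x y.
Proof.
by move=> hu [a ha]; exists (u^-1 * a); rewrite mulrCA -ha mulrA mulVr ?mul1r.
Qed.

End Divisibility.

Section CompactDVR.
Variables (R : idomainType) (pi : R) (q : nat).
Hypothesis hR : is_compact_dvr pi q.

Lemma pexp_neq0 n : pi ^+ n != 0.
Proof. by case: hR => pi0 *; rewrite expf_neq0. Qed.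

Lemma dvdR_pexp_cancel a b y : dvdR (pi ^+ (a + b)) (pi ^+ a * y) -> dvdR (pi ^+ b) y.
Proof. by rewrite exprD; apply: dvdR_mul2l; apply: pexp_neq0. Qed.

Lemma pi_ndvd1 : ~ dvdR pi 1.
Proof.
case: hR => _ /negP pi_nunit _ _ _ [z hz]; apply: pi_nunit; apply/unitrP.
by exists z; rewrite mulrC -hz.
Qed.

Lemma dvdR_pexp_leq a b : dvdR (pi ^+ a) (pi ^+ b) -> (a <= b)%N.
Proof.
move=> h; rewrite leqNgt; apply/negP => hab; move: h.
rewrite -(subnKC (ltnW hab)) -[X in dvdR _ X]mulr1 => /dvdR_pexp_cancel.
by move/(@dvdR_exp_leq _ _ _ 1%N); rewrite subn_gt0 expr1 => /(_ hab); apply: pi_ndvd1.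
Qed.

Lemma nonunit_dvdR x : x \notin GRing.unit -> dvdR pi x.
Proof.
case: (eqVneq x 0) => [-> _|]; first exact: dvdR0.
case: hR => _ _ hval _ _ /hval [u [[|k] [hu ->]]]; first by rewrite mulr1 hu.
by move=> _; apply: dvdR_mull; rewrite exprS; apply: dvdR_mulr; apply: dvdR_refl.
Qed.

Lemma unit_ndvdR x : x \is a GRing.unit -> ~ dvdR pi x.
Proof.
move=> hx [z hz]; apply: pi_ndvd1; exists (z * x^-1).
by rewrite mulrA -hz mulrV.
Qed.

Lemma unit_1subpiM z : (1 - pi * z) \is a GRing.unit.
Proof.
apply/negPn/negP => /nonunit_dvdR h; apply: pi_ndvd1.
have -> : (1 : R) = (1 - pi * z) + pi * z by ring.
by apply: dvdRD h _; exists z.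
Qed.

Lemma q_gt1 : (1 < q)%N.
Proof.
case: hR => _ _ _ [f [f_cover _]] _; case: q f f_cover => [|[|//]] f f_cover.
  by case: (f_cover 0) => [[]].
have [i1 h1] := f_cover 1; have [i0 h0] := f_cover 0.
exfalso; apply: pi_ndvd1; rewrite (ord1 i1) in h1; rewrite (ord1 i0) in h0.
by have := dvdRB h1 h0; congr dvdR; ring.
Qed.

Lemma ideal_pexp (I : set R) n : (forall r x, I x -> I (r * x)) -> I (pi ^+ n) ->
  exists2 e, (e <= n)%N & forall x, I x <-> dvdR (pi ^+ e) x.
Proof.
move=> hZ hn; have exP : exists k, `[< I (pi ^+ k) >] by exists n; apply/asboolP.
case: (ex_minnP exP) => e /asboolP he e_min; exists e; first by apply/e_min/asboolP.
move=> x; split; last by move=> [z ->]; rewrite mulrC; apply: hZ.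
case: (eqVneq x 0) => [-> _|]; first exact: dvdR0.
case: hR => _ _ hval _ _ /hval [u [k [hu ->]]] hx.
apply/dvdR_mull/dvdR_exp2l/e_min/asboolP.
by have := hZ u^-1 _ hx; rewrite mulrA mulVr // mul1r.
Qed.

Definition residue_system l (T : finType) (h : T -> R) :=
  (forall x, exists t, dvdR (pi ^+ l) (x - h t)) /\
  (forall s t, dvdR (pi ^+ l) (h s - h t) -> s = t).

(* pi-adic expansions with l digits taken from a system of residues mod pi *)
Lemma residue_system_exists l : exists h : l.-tuple 'I_q -> R, residue_system l h.
Proof.
elim: l => [|l [h [h_cover h_inj]]].
  exists (fun=> 0); split=> [x|s t _]; last by rewrite (tuple0 s) (tuple0 t).
  by exists [tuple]; rewrite expr0; apply: dvd1R.
case: hR => _ _ _ [f [f_cover f_inj]] _.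
exists (fun t => f (thead t) + pi * h [tuple of behead t]); split.
  move=> x; have [d [z hz]] := f_cover x; have [t [w hw]] := h_cover z.
  exists [tuple of d :: t]; rewrite theadE; exists w.
  have -> : [tuple of behead [tuple of d :: t]] = t by apply: val_inj.
  by rewrite exprS -mulrA -hw opprD addrA hz; ring.
move=> s t hst.
have hd : thead s = thead t.
  apply: f_inj; move: (@dvdR_exp_leq _ _ _ 1 _ (ltn0Sn l) hst); rewrite expr1 => hst1.
  have -> : f (thead s) - f (thead t) = (f (thead s) + pi * h [tuple of behead s]
     - (f (thead t) + pi * h [tuple of behead t]))
     - pi * (h [tuple of behead s] - h [tuple of behead t]) by ring.
  by apply: dvdRB hst1 _; apply: dvdR_mulr; apply: dvdR_refl.
have /h_inj /(congr1 val) hb : dvdR (pi ^+ l) (h [tuple of behead s] - h [tuple of behead t]).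
  apply: (@dvdR_pexp_cancel 1); rewrite add1n expr1.
  by move: hst; rewrite hd; congr dvdR; ring.
rewrite (tuple_eta s) (tuple_eta t) hd; apply: val_inj.
by rewrite /= -[behead s]/(val [tuple of behead s]) hb.
Qed.

Definition rep l : l.-tuple 'I_q -> R := projT1 (cid (residue_system_exists l)).
Arguments rep : clear implicits.

Lemma rep_cover l x : exists t, dvdR (pi ^+ l) (x - rep l t).
Proof. exact: (projT2 (cid (residue_system_exists l))).1. Qed.

Lemma rep_inj l s t : dvdR (pi ^+ l) (rep l s - rep l t) -> s = t.
Proof. exact: (projT2 (cid (residue_system_exists l))).2. Qed.

End CompactDVR.

Arguments rep {R pi q} hR l.

Section Submodules.
Variable R : idomainType.
Implicit Types (U : set (R * R)) (v w : R * R).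

Lemma submodB U v w : submod U -> U v -> U w -> U (v.1 - w.1, v.2 - w.2).
Proof. by case=> _ hD hZ hv /(hZ (-1)) /(hD _ _ hv); rewrite !mulN1r. Qed.

Lemma submod_unit_scale U u v : submod U -> u \is a GRing.unit ->
  U (u * v.1, u * v.2) -> U v.
Proof. by case: v => v1 v2 [_ _ hZ] hu /(hZ u^-1) /=; rewrite !mulKr. Qed.

Lemma index_is_gt0 U k : index_is U k -> (0 < k)%N.
Proof. by case: k => // [[f [f_cover _]]]; case: (f_cover (0, 0)) => [[]]. Qed.

Lemma index_is_leq U k k' : submod U -> index_is U k -> index_is U k' -> (k <= k')%N.
Proof.
move=> hU [f [_ f_inj]] [g [g_cover _]].
have [c hc] := choice (fun i => g_cover (f i)).
suff /leq_card : injective c by rewrite !card_ord.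
move=> i j cij; apply: f_inj; have := submodB hU (hc i) (hc j).
by rewrite cij => /(eq_rect _ U); apply; congr pair; rewrite /=; ring.
Qed.

Lemma index_is_uniq U k k' : submod U -> index_is U k -> index_is U k' -> k = k'.
Proof.
by move=> hU hk hk'; apply/eqP; rewrite eqn_leq !(index_is_leq hU).
Qed.

Lemma index_is_card U (T : finType) (g : T -> R * R) :
  (forall v, exists t, U (v.1 - (g t).1, v.2 - (g t).2)) ->
  (forall s t, U ((g s).1 - (g t).1, (g s).2 - (g t).2) -> s = t) ->
  index_is U #|T|.
Proof.
move=> g_cover g_inj; exists (g \o enum_val); split=> [v|i j /g_inj /enum_val_inj //].
by have [t ht] := g_cover v; exists (enum_rank t); rewrite /= enum_rankK.
Qed.

Record mx2 := Mx2 { m11 : R; m12 : R; m21 : R; m22 : R }.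

Definition mx2_apply (m : mx2) v : R * R :=
  (m11 m * v.1 + m12 m * v.2, m21 m * v.1 + m22 m * v.2).

Definition mx2_mul (m n : mx2) : mx2 :=
  Mx2 (m11 m * m11 n + m12 m * m21 n) (m11 m * m12 n + m12 m * m22 n)
      (m21 m * m11 n + m22 m * m21 n) (m21 m * m12 n + m22 m * m22 n).

Definition mx2_inv (m m' : mx2) :=
  cancel (mx2_apply m) (mx2_apply m') /\ cancel (mx2_apply m') (mx2_apply m).

Definition mx2_1 : mx2 := Mx2 1 0 0 1.
Definition mx2_swap : mx2 := Mx2 0 1 1 0.

Lemma mx2_apply1 v : mx2_apply mx2_1 v = v.
Proof. by case: v => x y; rewrite /mx2_apply /=; congr pair; ring. Qed.

Lemma mx2_apply_swap v : mx2_apply mx2_swap v = (v.2, v.1).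
Proof. by rewrite /mx2_apply /=; congr pair; ring. Qed.

Lemma mx2_inv1 : mx2_inv mx2_1 mx2_1.
Proof. by split=> v; rewrite !mx2_apply1. Qed.

Lemma mx2_inv_swap : mx2_inv mx2_swap mx2_swap.
Proof. by split=> -[x y]; rewrite !mx2_apply_swap. Qed.

Lemma mx2_apply_mul m n v : mx2_apply (mx2_mul m n) v = mx2_apply m (mx2_apply n v).
Proof. by rewrite /mx2_apply /=; congr pair; rewrite /=; ring. Qed.

Lemma mx2_inv_sym m m' : mx2_inv m m' -> mx2_inv m' m.
Proof. by case. Qed.

Lemma mx2_inv_mul m m' n n' : mx2_inv m m' -> mx2_inv n n' ->
  mx2_inv (mx2_mul m n) (mx2_mul n' m').
Proof.
by move=> [mK m'K] [nK n'K]; split=> v; rewrite !mx2_apply_mul ?mK ?nK ?m'K ?n'K.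
Qed.

Lemma mx2_applyB m v w :
  mx2_apply m (v.1 - w.1, v.2 - w.2) =
  ((mx2_apply m v).1 - (mx2_apply m w).1, (mx2_apply m v).2 - (mx2_apply m w).2).
Proof. by rewrite /mx2_apply /=; congr pair; rewrite /=; ring. Qed.

Lemma mx2_applyD m v w :
  mx2_apply m (v.1 + w.1, v.2 + w.2) =
  ((mx2_apply m v).1 + (mx2_apply m w).1, (mx2_apply m v).2 + (mx2_apply m w).2).
Proof. by rewrite /mx2_apply /=; congr pair; rewrite /=; ring. Qed.

Lemma preimage_mx2K m m' U : mx2_inv m m' ->
  mx2_apply m' @^-1` (mx2_apply m @^-1` U) = U.
Proof. by move=> [_ m'K]; apply/funext => v; rewrite /preimage /mkset m'K. Qed.

Lemma submod_preimage m U : submod U -> submod (mx2_apply m @^-1` U).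
Proof.
case=> U0 hD hZ; split=> [|v w hv hw|r v hv]; rewrite /preimage /mx2_apply /=.
- by rewrite !mulr0 !addr0.
- by apply: (eq_rect _ U (hD _ _ hv hw)); congr pair; rewrite /=; ring.
- by apply: (eq_rect _ U (hZ r _ hv)); congr pair; rewrite /=; ring.
Qed.

Lemma index_is_preimage m m' U k : mx2_inv m m' -> index_is U k ->
  index_is (mx2_apply m @^-1` U) k.
Proof.
move=> [mK m'K] [f [f_cover f_inj]]; exists (mx2_apply m' \o f); split.
  move=> v; have [i hi] := f_cover (mx2_apply m v).
  by exists i; rewrite /preimage /comp /mkset mx2_applyB m'K.
by move=> i j; rewrite /preimage /comp /mkset mx2_applyB !m'K; apply: f_inj.
Qed.

(* [index U] is 0 when [U] has no finite index. *)
Definition index U : nat := xget 0%N [set k | index_is U k].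

Lemma indexE U k : submod U -> index_is U k -> index U = k.
Proof.
move=> hU hk; have := xgetPex 0%N (ex_intro (fun k => index_is U k) k hk).
by move/(index_is_uniq hU)/(_ hk).
Qed.

Lemma index_preimage m m' U : mx2_inv m m' -> index (mx2_apply m @^-1` U) = index U.
Proof.
move=> mm'; rewrite /index; congr xget; apply/seteqP; split=> k; last first.
  exact: index_is_preimage mm'.
by move/(index_is_preimage (mx2_inv_sym mm')); rewrite preimage_mx2K.
Qed.

Definition fi_submod U := submod U /\ exists k, index_is U k.

Lemma index_gt0 U : fi_submod U -> (0 < index U)%N.
Proof. by move=> [hU [k hk]]; rewrite (indexE hU hk); apply: index_is_gt0 hk. Qed.

Lemma fi_submod_preimage m m' U : mx2_inv m m' ->
  fi_submod (mx2_apply m @^-1` U) <-> fi_submod U.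
Proof.
suff fi_pre n n' V : mx2_inv n n' -> fi_submod V -> fi_submod (mx2_apply n @^-1` V).
  move=> mm'; split=> [|/(fi_pre _ _ _ mm') //].
  by move/(fi_pre _ _ _ (mx2_inv_sym mm')); rewrite preimage_mx2K.
move=> nn' [hV [k hk]]; split; first exact: submod_preimage.
by exists k; apply: index_is_preimage nn' hk.
Qed.

End Submodules.

Arguments mx2_1 {R}.
Arguments mx2_swap {R}.

Section Lattices.
Variables (R : idomainType) (pi : R) (q : nat).
Hypothesis hR : is_compact_dvr pi q.
Implicit Types (U L : set (R * R)) (v w : R * R).

Definition diag_lattice l1 l2 : set (R * R) :=
  [set v | dvdR (pi ^+ l1) v.1 /\ dvdR (pi ^+ l2) v.2].

Lemma submod_diag l1 l2 : submod (diag_lattice l1 l2).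
Proof.
split=> [|v w [? ?] [? ?]|r v [? ?]]; first by split; apply: dvdR0.
  by split; apply: dvdRD.
by split; apply: dvdR_mull.
Qed.

Lemma diag_lattice_sub l1 l2 n1 n2 : (l1 <= n1)%N -> (l2 <= n2)%N ->
  diag_lattice n1 n2 `<=` diag_lattice l1 l2.
Proof.
by move=> h1 h2 v [? ?]; split; [apply: dvdR_exp_leq h1 _|apply: dvdR_exp_leq h2 _].
Qed.

Lemma mx2_apply_diag n m v : diag_lattice n n v -> diag_lattice n n (mx2_apply m v).
Proof. by move=> [? ?]; split; apply: dvdRD; apply: dvdR_mull. Qed.

Lemma index_diag l1 l2 : index_is (diag_lattice l1 l2) (q ^ l1 * q ^ l2).
Proof.
have -> : (q ^ l1 * q ^ l2 = #|{: l1.-tuple 'I_q * l2.-tuple 'I_q}|)%N.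
  by rewrite card_prod !card_tuple card_ord.
apply: (index_is_card (g := fun st => (rep hR l1 st.1, rep hR l2 st.2))).
  move=> v; have [s hs] := rep_cover hR l1 v.1; have [t ht] := rep_cover hR l2 v.2.
  by exists (s, t).
by move=> [s1 s2] [t1 t2] [/= /rep_inj -> /rep_inj ->].
Qed.

(* Pigeonhole: among pi^j e, j <= k, two lie in the same coset, and their
   difference is a unit multiple (1 - pi^(j-i)) of pi^i e. *)
Lemma index_is_pexp_mul U k e : submod U -> index_is U k ->
  U (pi ^+ k * e.1, pi ^+ k * e.2).
Proof.
move=> hU [f [f_cover _]].
have [c hc] := choice (fun j : 'I_k.+1 => f_cover (pi ^+ j * e.1, pi ^+ j * e.2)).
have [i [j [ij cij]]] : exists i j : 'I_k.+1, (i < j)%N /\ c i = c j.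
  have /injectivePn [i [j]] : ~~ injectiveb c.
    by apply/injectiveP => /leq_card; rewrite !card_ord ltnn.
  by case: (ltngtP i j) => [ij _|ji _ /esym|/val_inj -> /eqP //]; [exists i, j|exists j, i].
have ej : pi ^+ j = pi * pi ^+ (j - i.+1) * pi ^+ i.
  by rewrite -exprS -exprD subnSK // subnK // ltnW.
have hi : U (pi ^+ i * e.1, pi ^+ i * e.2).
  apply: (submod_unit_scale hU (unit_1subpiM hR (pi ^+ (j - i.+1)))).
  have := submodB hU (hc i) (hc j); rewrite cij => /(eq_rect _ U); apply.
  by rewrite ej; congr pair; rewrite /=; ring.
case: hU => _ _ hZ; have := hZ (pi ^+ (k - i)) _ hi.
by rewrite /= !mulrA -!exprD subnK // -ltnS.
Qed.

Lemma index_is_diag_sub U k : submod U -> index_is U k -> diag_lattice k k `<=` U.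
Proof.
move=> hU hk [x y] [[a /= ->] [b /= ->]].
have := index_is_pexp_mul (a, 0) hU hk; have := index_is_pexp_mul (0, b) hU hk.
case: hU => _ hD _ h2 h1; have := hD _ _ h1 h2.
by rewrite /= !mulr0 addr0 add0r.
Qed.

Lemma submod_M_diag l1 l2 U :
  submod_M pi l1 l2 U <-> submod U /\ diag_lattice l1 l2 `<=` U.
Proof.
split=> [[hU h1 h2]|[hU hK]]; last first.
  by split=> // [x|y]; apply: hK; split; rewrite /= ?mulr0;
    try apply: dvdR0; apply/dvdR_mulr/dvdR_refl.
split=> // -[x y] [[a /= ->] [b /= ->]].
by case: hU => _ hD _; have := hD _ _ (h1 a) (h2 b); rewrite /= addr0 add0r.
Qed.

(* Equivalently, R^2 / L is isomorphic to R/pi^l1 x R/pi^l2. *)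
Definition of_type l1 l2 L :=
  exists m m', mx2_inv m m' /\ L = mx2_apply m @^-1` diag_lattice l1 l2.

Lemma of_type_submod l1 l2 L : of_type l1 l2 L -> submod L.
Proof. by move=> [m [m' [_ ->]]]; apply/submod_preimage/submod_diag. Qed.

Lemma of_type_index l1 l2 L : of_type l1 l2 L -> index_is L (q ^ l1 * q ^ l2).
Proof. by move=> [m [m' [mm' ->]]]; apply: (index_is_preimage mm'); apply: index_diag. Qed.

Lemma of_type_diag l1 l2 : of_type l1 l2 (diag_lattice l1 l2).
Proof.
exists mx2_1, mx2_1; split; first exact: mx2_inv1.
by apply/funext => v; rewrite /preimage /mkset mx2_apply1.
Qed.

Lemma of_type_preimage n n' l1 l2 L : mx2_inv n n' -> of_type l1 l2 L ->
  of_type l1 l2 (mx2_apply n @^-1` L).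
Proof.
move=> nn' [m [m' [mm' ->]]]; exists (mx2_mul m n), (mx2_mul n' m').
split; first exact: mx2_inv_mul.
by apply/funext => v; rewrite /preimage /mkset mx2_apply_mul.
Qed.

Lemma of_type_diag_sub l1 l2 n L : of_type l1 l2 L -> (l1 <= n)%N -> (l2 <= n)%N ->
  diag_lattice n n `<=` L.
Proof.
move=> [m [m' [_ ->]]] h1 h2 v /(mx2_apply_diag m).
exact: diag_lattice_sub.
Qed.

Lemma of_type_sub_diag l1 l2 L : of_type l1 l2 L -> (l2 <= l1)%N ->
  L `<=` diag_lattice l2 l2.
Proof.
move=> [m [m' [[mK _] ->]]] hl v [h1 h2]; rewrite -(mK v).
by apply: mx2_apply_diag; split=> //; apply: dvdR_exp_leq hl h1.
Qed.

Lemma of_type_witness l1 l2 L : of_type l1 l2 L -> exists2 v, L v &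
  forall k, dvdR (pi ^+ k) v.1 -> dvdR (pi ^+ k) v.2 -> (k <= l2)%N.
Proof.
move=> [m [m' [[mK m'K] ->]]]; exists (mx2_apply m' (0, pi ^+ l2)).
  by rewrite /preimage /mkset m'K; split; [apply: dvdR0|apply: dvdR_refl].
move=> k h1 h2; have [_] := mx2_apply_diag m (conj h1 h2).
by rewrite m'K => /(dvdR_pexp_leq hR).
Qed.

Lemma of_type_uniq l1 l2 l1' l2' L : of_type l1 l2 L -> of_type l1' l2' L ->
  (l2 <= l1)%N -> (l2' <= l1')%N -> l1 = l1' /\ l2 = l2'.
Proof.
move=> tL tL' h h'.
have e2 : l2 = l2'.
  apply/eqP; rewrite eqn_leq; apply/andP; split.
    have [v /(of_type_sub_diag tL h) [? ?]] := of_type_witness tL'; exact.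
  have [v /(of_type_sub_diag tL' h') [? ?]] := of_type_witness tL; exact.
split=> //; have := index_is_uniq (of_type_submod tL) (of_type_index tL) (of_type_index tL').
by rewrite -!expnD e2 => /(expnI (q_gt1 hR)) /eqP; rewrite eqn_add2r => /eqP.
Qed.

Definition line_submod l1 l2 a b : set (R * R) :=
  [set v | diag_lattice l2 l2 v /\ dvdR (pi ^+ l1) (a * v.1 + b * v.2)].

Lemma of_type_line l1 l2 L : of_type l1 l2 L -> (l2 <= l1)%N ->
  exists a b, ~ (dvdR pi a /\ dvdR pi b) /\ L = line_submod l1 l2 a b.
Proof.
move=> tL hl; have sub_diag := of_type_sub_diag tL hl.
case: tL sub_diag => m [m' [[mK m'K] ->]] sub_diag; exists (m11 m), (m12 m); split.
  move=> [ha hb]; apply: (pi_ndvd1 hR); have := congr1 fst (m'K (1, 0)).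
  by rewrite {1}/mx2_apply /= => <-; apply: dvdRD; apply: dvdR_mulr.
apply/funext => v; apply/propext; split=> [hv|[hv h1]].
  by split; [apply: sub_diag|case: hv].
by split=> //; have [_ ?] := mx2_apply_diag m hv.
Qed.

Lemma of_type_eq_diag l L : of_type l l L -> L = diag_lattice l l.
Proof.
move=> /of_type_line [] // a [b [_ ->]]; apply/funext => v; apply/propext.
split=> [[]//|[h1 h2]]; split=> //.
by apply: dvdRD; apply: dvdR_mull.
Qed.

(* If pi^e1 R is the ideal of first coordinates of L and divides all second
   coordinates, pick (pi^e1, pi^e1 w') in L and let L meet 0 x R in 0 x pi^e0 R;
   then L = {(x, y) | pi^e1 | x, pi^e0 | y - w' x}, of type (e0, e1). *)
Lemma of_type_exists_aux L n e1 : submod L -> diag_lattice n n `<=` L ->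
  (forall x, (exists y, L (x, y)) <-> dvdR (pi ^+ e1) x) ->
  (forall x y, L (x, y) -> dvdR (pi ^+ e1) y) ->
  exists l1 l2, [/\ (l2 <= l1)%N, (l1 <= n)%N & of_type l1 l2 L].
Proof.
move=> hL hK h1 h2; have [L0 hD hZ] := hL.
have [w hw] : exists w : R, L (pi ^+ e1, w) by apply/h1/dvdR_refl.
have [w' ew] := h2 _ _ hw.
have [e0 he0 h0] : exists2 e, (e <= n)%N & forall y, L (0, y) <-> dvdR (pi ^+ e) y.
  apply: (ideal_pexp hR) => [r y /(hZ r)|]; first by rewrite mulr0.
  by apply: hK; split; [apply: dvdR0|apply: dvdR_refl].
have le10 : (e1 <= e0)%N by apply/(dvdR_pexp_leq hR)/(h2 0)/h0/dvdR_refl.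
exists e0, e1; split=> //; exists (Mx2 (- w') 1 1 0), (Mx2 0 1 1 w'); split.
  by split=> -[x y]; rewrite /mx2_apply /=; congr pair; ring.
apply/funext => -[x y]; apply/propext; rewrite /preimage /mkset /mx2_apply /=.
rewrite mul1r mul0r addr0 mul1r; split=> [hxy|[[z /= ez] [x' /= ex]]].
  have [x' ex] := (h1 x).1 (ex_intro _ y hxy); split; last by exists x'.
  have := hD _ _ hxy (hZ (- x') _ hw); rewrite /= ex.
  have -> : pi ^+ e1 * x' + - x' * pi ^+ e1 = 0 by ring.
  by move/h0/(eq_rect _ (dvdR _)); apply; rewrite ew; ring.
have := hD _ _ (hZ x' _ hw) ((h0 _).2 (ex_intro _ z (erefl _))).
by rewrite ew => /(eq_rect _ L); apply; congr pair; rewrite /= -?ez ex; ring.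
Qed.

Lemma of_type_exists L n : submod L -> diag_lattice n n `<=` L ->
  exists l1 l2, [/\ (l2 <= l1)%N, (l1 <= n)%N & of_type l1 l2 L].
Proof.
move=> hL hK; have [_ hD hZ] := hL.
have [e1 _ he1] : exists2 e, (e <= n)%N &
    forall x, (exists y, L (x, y)) <-> dvdR (pi ^+ e) x.
  apply: (ideal_pexp hR) => [r x [y /(hZ r)]|]; first by exists (r * y).
  by exists 0; apply: hK; split; [apply: dvdR_refl|apply: dvdR0].
have [e2 _ he2] : exists2 e, (e <= n)%N &
    forall y, (exists x, L (x, y)) <-> dvdR (pi ^+ e) y.
  apply: (ideal_pexp hR) => [r y [x /(hZ r)]|]; first by exists (r * x).
  by exists 0; apply: hK; split; [apply: dvdR0|apply: dvdR_refl].
case: (leqP e1 e2) => he.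
  apply: (of_type_exists_aux hL hK he1) => x y hxy.
  by apply: (dvdR_exp_leq he); apply/he2; exists x.
pose L' := mx2_apply mx2_swap @^-1` L.
have swapK : mx2_apply mx2_swap @^-1` L' = L.
  by apply/funext => v; rewrite /L' /preimage /mkset !mx2_apply_swap -surjective_pairing.
have [l1 [l2 [h21 h1 tL']]] :
    exists l1 l2, [/\ (l2 <= l1)%N, (l1 <= n)%N & of_type l1 l2 L'].
  apply: (@of_type_exists_aux L' n e2).
  - exact: submod_preimage.
  - by move=> v /(mx2_apply_diag mx2_swap) /hK.
  - move=> y; rewrite -he2 /L' /preimage /mkset.
    by split=> -[x hx]; exists x; rewrite ?mx2_apply_swap in hx *.
  - move=> x y; rewrite /L' /preimage /mkset mx2_apply_swap => hxy.
    by apply: (dvdR_exp_leq (ltnW he)); apply/he1; exists x.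
by exists l1, l2; split=> //; rewrite -swapK; apply: of_type_preimage (mx2_inv_swap R) tL'.
Qed.

End Lattices.

Section Lines.
Variables (R : idomainType) (pi : R) (q : nat).
Hypothesis hR : is_compact_dvr pi q.
Variables l1 l2 : nat.
Hypothesis l21 : (l2 <= l1)%N.
Local Notation line := (line_submod pi l1 l2).

Lemma line_sub a b a' b' :
  dvdR (pi ^+ (l1 - l2)) (a - a') -> dvdR (pi ^+ (l1 - l2)) (b - b') ->
  line a b `<=` line a' b'.
Proof.
move=> haa hbb v [hd hv]; split=> //; case: hd => [[x' ex] [y' ey]].
have -> : a' * v.1 + b' * v.2 = (a * v.1 + b * v.2) - ((a - a') * v.1 + (b - b') * v.2).
  by ring.
apply: dvdRB hv _; rewrite -(subnKC l21) exprD ex ey.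
by apply: dvdRD; rewrite mulrCA; apply: dvdR_mul (dvdR_refl _) (dvdR_mulr _ _).
Qed.

Lemma line_congr a b a' b' :
  dvdR (pi ^+ (l1 - l2)) (a - a') -> dvdR (pi ^+ (l1 - l2)) (b - b') ->
  line a b = line a' b'.
Proof.
move=> haa hbb; apply/seteqP; split; apply: line_sub => //;
  by rewrite -opprB; apply: dvdRN.
Qed.

Lemma line_unit_scale u a b : u \is a GRing.unit -> line (u * a) (u * b) = line a b.
Proof.
move=> hu; apply/seteqP; split=> v [hv h]; split=> //; move: h.
  by rewrite -!mulrA -mulrDr => /(dvdR_unit_mull hu).
by rewrite -!mulrA -mulrDr; apply: dvdR_mull.
Qed.

Lemma line_cross a b a' b' : line a b = line a' b' ->
  dvdR (pi ^+ (l1 - l2)) (a * b' - b * a').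
Proof.
move=> e; have : line a' b' (pi ^+ l2 * b', - (pi ^+ l2 * a')).
  split; first by split; [|apply: dvdRN]; apply/dvdR_mulr/dvdR_refl.
  by rewrite /= (_ : _ + _ = 0); [apply: dvdR0|ring].
rewrite -e => -[_ /=]; rewrite -{1}(subnKC l21) => h.
by apply: (dvdR_pexp_cancel hR); move: h; congr dvdR; ring.
Qed.

Lemma line_of_type1 b : of_type pi l1 l2 (line 1 b).
Proof.
exists (Mx2 1 b 0 1), (Mx2 1 (- b) 0 1); split.
  by split=> -[x y]; rewrite /mx2_apply /=; congr pair; ring.
apply/seteqP; split=> -[x y]; rewrite /preimage /mkset /mx2_apply /= !mul1r mul0r add0r.
  by move=> [[_ hy] h]; split; rewrite // -[x]mul1r.
move=> [/= h hy]; split; last by rewrite mul1r.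
split=> //=; have -> : x = (x + b * y) - b * y by ring.
by apply: dvdRB; [apply: dvdR_exp_leq l21 h|apply: dvdR_mull].
Qed.

Lemma line_of_type2 a : of_type pi l1 l2 (line a 1).
Proof.
have -> : line a 1 = mx2_apply mx2_swap @^-1` line 1 a.
  apply/seteqP; split=> v; rewrite /preimage /mkset mx2_apply_swap /=.
    by move=> [[? ?] h]; split; [split|move: h; congr dvdR; ring].
  by move=> [[? ?] h]; split; [split|move: h; congr dvdR; ring].
exact: of_type_preimage (mx2_inv_swap R) (line_of_type1 a).
Qed.

End Lines.

Arguments line_unit_scale {R pi l1 l2 u a b}.

Section TypeLines.
Variables (R : idomainType) (pi : R) (q : nat).
Hypothesis hR : is_compact_dvr pi q.
Variables l2 r : nat.
Hypothesis r_gt0 : (0 < r)%N.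
Local Notation line := (line_submod pi (l2 + r) l2).

(* The lines (1 : s) and (pi t : 1), s mod pi^r and t mod pi^(r-1), are the
   q^r + q^(r-1) points of the projective line over R/pi^r. *)
Definition type_line (x : r.-tuple 'I_q + r.-1.-tuple 'I_q) : set (R * R) :=
  match x with
  | inl s => line 1 (rep hR r s)
  | inr t => line (pi * rep hR r.-1 t) 1
  end.

Lemma type_line_of_type x : of_type pi (l2 + r) l2 (type_line x).
Proof. by case: x => ? /=; [apply: line_of_type1|apply: line_of_type2]; rewrite leq_addr. Qed.

Lemma type_line_inj : injective type_line.
Proof.
have cross a b a' b' : line a b = line a' b' -> dvdR (pi ^+ r) (a * b' - b * a').
  by move=> e; have := line_cross hR (leq_addr r l2) e; rewrite addKn.
have ndvd z : ~ dvdR (pi ^+ r) (1 - pi * z).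
  move/(dvdR_exp_leq r_gt0); rewrite expr1.
  exact: (unit_ndvdR hR (unit_1subpiM hR z)).
case=> [s|t] [s'|t'] /= /cross.
- by rewrite !mul1r mulr1 -opprB => /dvdRN; rewrite opprK => /rep_inj ->.
- by rewrite mulr1 mulrCA => /ndvd.
- by rewrite mulr1 -mulrA -opprB => /dvdRN; rewrite opprK => /ndvd.
- rewrite mulr1 mul1r -mulrBr -[X in pi ^+ X](prednK r_gt0) -add1n.
  by rewrite -[pi in pi * _]expr1 => /(dvdR_pexp_cancel hR) /rep_inj ->.
Qed.

Lemma type_line_surj L : of_type pi (l2 + r) l2 L -> exists x, L = type_line x.
Proof.
move=> tL; have [a [b [ab ->]]] := of_type_line hR tL (leq_addr _ _).
have congr_r a' b' c' d' : dvdR (pi ^+ r) (a' - c') -> dvdR (pi ^+ r) (b' - d') ->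
    line a' b' = line c' d'.
  move=> ha hb; rewrite -(addKn l2 r) in ha hb; exact: (line_congr (leq_addr r l2) ha hb).
have [ua|na] := boolP (a \is a GRing.unit).
  have [s hs] := rep_cover hR r (a^-1 * b); exists (inl s) => /=.
  rewrite -(line_unit_scale (_ : a^-1 \is a GRing.unit)) ?unitrV // mulVr //.
  by apply: congr_r => //; rewrite subrr; apply: dvdR0.
have [s es] := nonunit_dvdR hR na.
have ub : b \is a GRing.unit.
  by apply/negPn/negP => /(nonunit_dvdR hR) hb; apply: ab; split=> //; exists s.
have [t ht] := rep_cover hR r.-1 (b^-1 * s); exists (inr t) => /=.
rewrite -(line_unit_scale (_ : b^-1 \is a GRing.unit)) ?unitrV // mulVr // es mulrCA.
apply: congr_r; last by rewrite subrr; apply: dvdR0.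
rewrite -mulrBr -[X in pi ^+ X](prednK r_gt0) exprS.
exact: dvdR_mul (dvdR_refl _) ht.
Qed.

End TypeLines.

Arguments type_line {R pi q} hR l2 r x.

Definition type_count q r := if r is 0 then 1%N else (q ^ r + q ^ r.-1)%N.

Section Counting.
Local Open Scope nat_scope.

Definition pcount (T : finType) (P : T -> Prop) : nat := #|[pred t | `[< P t >]]|.

Lemma pcount_sum (T : finType) (P : T -> Prop) : pcount P = \sum_t `[< P t >].
Proof.
rewrite /pcount -sum1_card big_mkcond /=; apply: eq_bigr => t _.
by rewrite inE; case: `[< P t >].
Qed.

Lemma eq_pcount (T : finType) (P Q : T -> Prop) :
  (forall t, P t <-> Q t) -> pcount P = pcount Q.
Proof.
move=> PQ; rewrite !pcount_sum; apply: eq_bigr => t _.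
by congr nat_of_bool; apply/asboolP/asboolP => /PQ.
Qed.

Lemma pcount1 (T : finType) (t0 : T) : pcount (eq^~ t0) = 1.
Proof.
by rewrite /pcount -(card1 t0); apply: eq_card => t; rewrite !inE; apply/asboolP/eqP.
Qed.

Lemma ncard_eq T (A : set T) k : A #= `I_k -> ncard A = k.
Proof.
move=> Ak; rewrite /ncard; have := xgetPex 0 (ex_intro (fun n => A #= `I_n) k Ak).
by move/card_esym/card_eq_trans/(_ Ak)/card_eq_II.
Qed.

Lemma ncard_pcount X (T : finType) (d : T -> X) (A : set X) :
  injective d -> A `<=` range d -> finite_set A /\ ncard A = pcount (A \o d).
Proof.
move=> d_inj Ad; pose p : pred T := [pred t | `[< A (d t) >]].
have -> : A = d @` [set t | p t].
  apply/seteqP; split=> [x Ax|_ [t /asboolP At <-] //].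
  by have [t _ dt] := Ad x Ax; exists t => //; apply/asboolP; rewrite dt.
have pI : [set t | p t] #= `I_#|p|.
  apply: card_eq_trans (card_esym card_II).
  have -> : [set t | p t] = @enum_val _ (mem p) @` [set: 'I_#|p|].
    apply/seteqP; split=> [t pt|_ [i _ <-]]; last exact: (enum_valP i).
    by exists (enum_rank_in pt t) => //; rewrite enum_rankK_in.
  by apply: inj_card_eq => i j _ _; apply: enum_val_inj.
have dpI : d @` [set t | p t] #= `I_#|p|.
  by apply: card_eq_trans pI; apply: inj_card_eq => s t _ _; apply: d_inj.
split; first by exists #|p|.
rewrite (ncard_eq dpI); apply: eq_card => t; rewrite !inE /=.
by apply/idP/asboolP => [pt|[s ps /d_inj <-]]; first exists t.
Qed.

Definition fcons (T : finType) k (x : T) (M : {ffun 'I_k -> T}) : {ffun 'I_k.+1 -> T} :=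
  [ffun i => if unlift ord0 i is Some j then M j else x].

Lemma fcons0 (T : finType) k x (M : {ffun 'I_k -> T}) : fcons x M ord0 = x.
Proof. by rewrite ffunE unlift_none. Qed.

Lemma fconsS (T : finType) k x (M : {ffun 'I_k -> T}) j : fcons x M (lift ord0 j) = M j.
Proof. by rewrite ffunE liftK. Qed.

Lemma pcount_ffunS (T : finType) k (P : {ffun 'I_k.+1 -> T} -> Prop) :
  pcount P = \sum_x pcount (fun M : {ffun 'I_k -> T} => P (fcons x M)).
Proof.
rewrite pcount_sum (eq_bigr _ (fun x _ => pcount_sum _)) pair_big /=.
rewrite (reindex (fun p : T * {ffun 'I_k -> T} => fcons p.1 p.2)) //=.
exists (fun M : {ffun 'I_k.+1 -> T} => (M ord0, [ffun j => M (lift ord0 j)])).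
  by move=> [x M] _ /=; rewrite fcons0; congr pair; apply/ffunP => j; rewrite ffunE fconsS.
move=> M _; apply/ffunP => i; rewrite ffunE; case: unliftP => [j ->|->] //.
by rewrite ffunE.
Qed.

Lemma forall_ordS k (p : 'I_k.+1 -> Prop) :
  (forall i, p i) <-> p ord0 /\ forall j, p (lift ord0 j).
Proof. by split=> [h|[h0 h] i]; [split|case: (unliftP ord0 i) => [j ->|->]]. Qed.

Lemma mul_eq_dvd_div a p m : 0 < a -> a * p = m <-> a %| m /\ p = m %/ a.
Proof.
by move=> a0; split=> [<-|[am ->]]; [rewrite dvdn_mulr // mulKn|rewrite mulnC divnK].
Qed.

Definition tuple_count (T : finType) (P : T -> Prop) (w : T -> nat) k m :=
  pcount (fun M : {ffun 'I_k -> T} => (forall j, P (M j)) /\ \prod_j w (M j) = m).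

Section WeightedTuples.
Variables (T : finType) (P : T -> Prop) (w : T -> nat).
Hypothesis w_gt0 : forall t, P t -> 0 < w t.

Lemma tuple_count0 m : tuple_count P w 0 m = (m == 1).
Proof.
rewrite /tuple_count pcount_sum (eq_bigr (fun=> (m == 1 : nat))).
  by rewrite sum_nat_const card_ffun !card_ord expn0 mul1n.
move=> M _; rewrite big_ord0; case: eqP => [->|m1]; case: asboolP => //.
  by case; split=> // -[].
by case=> _ /esym.
Qed.

Lemma pcount_star (P0 : T -> Prop) (Q : T -> T -> Prop) k m :
  (forall x, P0 x -> 0 < w x) ->
  pcount (fun M : {ffun 'I_k.+1 -> T} =>
    [/\ P0 (M ord0), forall j, Q (M ord0) (M (lift ord0 j)) & \prod_i w (M i) = m]) =
  \sum_x (if `[< P0 x >] && (w x %| m) then tuple_count (Q x) w k (m %/ w x) else 0).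
Proof.
move=> w0_gt0; rewrite pcount_ffunS; apply: eq_bigr => x _.
case: (asboolP (P0 x)) => /= [px|npx]; last first.
  by rewrite pcount_sum big1 // => M _; case: asboolP => // -[]; rewrite fcons0.
case: ifPn => hd; last first.
  rewrite pcount_sum big1 // => M _; case: asboolP => // -[_ _].
  rewrite big_ord_recl fcons0 => /(mul_eq_dvd_div _ _ (w0_gt0 _ px)) [wm _].
  by rewrite wm in hd.
apply: eq_pcount => M; rewrite big_ord_recl !fcons0.
have -> : \prod_(i < k) w (fcons x M (lift ord0 i)) = \prod_i w (M i).
  by apply: eq_bigr => i _; rewrite fconsS.
have wx := mul_eq_dvd_div _ _ (w0_gt0 _ px).
split=> [[_ QM /wx [_ ->]]|[QM ->]]; first by split=> // j; rewrite -(fconsS x).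
by split=> [//|j|]; [rewrite fconsS|apply/wx].
Qed.

Lemma tuple_countS k m : tuple_count P w k.+1 m =
  \sum_x (if `[< P x >] && (w x %| m) then tuple_count P w k (m %/ w x) else 0).
Proof.
rewrite -pcount_star //; apply: eq_pcount => M; rewrite forall_ordS.
by split=> [[[]]|[? ? ?]]; split.
Qed.

Definition weight_count (d : nat) : rat := (pcount (fun t => P t /\ w t = d))%:R.

Lemma dmul_weight_count (g : dseries) m : 0 < m ->
  dmul weight_count g m =
  (\sum_x (if `[< P x >] && (w x %| m)%N then g (m %/ w x)%N else 0))%R.
Proof.
move=> m0; rewrite /dmul /weight_count.
under eq_bigr => d _ do rewrite pcount_sum natr_sum mulr_suml.
rewrite exchange_big /=; apply: eq_bigr => x _.
case: (asboolP (P x)) => /= [px|npx]; last first.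
  by rewrite big1 // => d _; case: asboolP => [[]|_] //; rewrite mul0r.
case: (boolP (w x %| m)) => hd; last first.
  rewrite big1 // => d dm; case: asboolP => [[_ wd]|_]; last by rewrite mul0r.
  by move: hd; rewrite wd dm.
have wm : w x < m.+1 by rewrite ltnS dvdn_leq.
rewrite (bigD1 (Ordinal wm)) //= big1 ?addr0.
  by case: asboolP => [_|[]] //; rewrite mul1r.
move=> d /andP[_ /eqP dw]; case: asboolP => [[_ wd]|_]; last by rewrite mul0r.
by exfalso; apply: dw; apply: val_inj.
Qed.

Lemma dpow_weight_count k m : 0 < m -> dpow weight_count k m = (tuple_count P w k m)%:R.
Proof.
elim: k m => [|k IH] m m0; first by rewrite tuple_count0 /dpow /= /done_.
rewrite /dpow iterS -/(dpow _ k) dmul_weight_count // tuple_countS natr_sum.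
apply: eq_bigr => x _; case: ifP => [/andP [/asboolP px wm]|_] //.
by rewrite IH // divn_gt0 ?w_gt0 // dvdn_leq.
Qed.

End WeightedTuples.

Lemma tuple_count_inj (T : finType) (P P' : T -> Prop) (w w' : T -> nat) (h : T -> T) k m :
  injective h -> (forall t, P' (h t) <-> P t) -> (forall t, w' (h t) = w t) ->
  tuple_count P' w' k m = tuple_count P w k m.
Proof.
move=> h_inj hP hw; rewrite /tuple_count !pcount_sum.
rewrite (reindex_inj (h := fun M : {ffun 'I_k -> T} => [ffun j => h (M j)])); last first.
  by move=> M M' /ffunP eqM; apply/ffunP => j; move: (eqM j); rewrite !ffunE => /h_inj.
apply: eq_bigr => M _; congr nat_of_bool.
have -> : \prod_j w' ([ffun j => h (M j)] j) = \prod_j w (M j).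
  by apply: eq_bigr => j _; rewrite ffunE hw.
apply/asboolP/asboolP => -[PM ->]; split=> // j; first by move: (PM j); rewrite ffunE hP.
by rewrite ffunE hP.
Qed.
End Counting.

Lemma sum_ord2_pick (V : nmodType) n (P : nat -> nat -> bool) (f : nat -> nat -> V) a b :
  (a < n)%N -> (b < n)%N -> (forall i j, P i j -> i = a /\ j = b) ->
  \sum_(i < n) \sum_(j < n) (if P i j then f i j else 0) = if P a b then f a b else 0.
Proof.
move=> ha hb uniq; rewrite (bigD1 (Ordinal ha)) //= [X in _ + X]big1 ?addr0.
  rewrite (bigD1 (Ordinal hb)) //= big1 ?addr0 // => j /eqP jb.
  by case: ifP => // /uniq [_ e]; case: jb; apply: val_inj.
move=> i /eqP ia; apply: big1 => j _.
by case: ifP => // /uniq [e _]; case: ia; apply: val_inj.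
Qed.

Section Encoding.
Variables (R : idomainType) (pi : R) (q : nat).
Hypothesis hR : is_compact_dvr pi q.
Variable n : nat.
Implicit Types (U L : set (R * R)) (v w : R * R).

(* A set stable under translation by pi^n R^2 is the union of the cosets of
   its points; it is encoded by the residues mod pi^n of their coordinates. *)
Definition code := {set n.-tuple 'I_q * n.-tuple 'I_q}.

Definition decode (S : code) : set (R * R) :=
  [set v | exists2 p, p \in S &
     diag_lattice pi n n (v.1 - rep hR n p.1, v.2 - rep hR n p.2)].

Definition encode U : code := [set p | `[< U (rep hR n p.1, rep hR n p.2) >]]%SET.

Definition diag_stable U :=
  forall v w, U v -> diag_lattice pi n n w -> U (v.1 + w.1, v.2 + w.2).

Lemma decodeK : cancel decode encode.
Proof.
move=> S; apply/setP => -[s t]; rewrite inE; apply/asboolP/idP => [|st].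
  by case=> -[s' t'] st' [/= /rep_inj -> /rep_inj ->].
by exists (s, t) => //; rewrite !subrr; split; apply: dvdR0.
Qed.

Lemma encodeK U : diag_stable U -> decode (encode U) = U.
Proof.
move=> hU; apply/seteqP; split=> [v [p] | v hv].
  rewrite inE => /asboolP /hU hp /hp /=; rewrite ![rep hR n _ + _]addrC !subrK.
  by rewrite -surjective_pairing.
have [s hs] := rep_cover hR n v.1; have [t ht] := rep_cover hR n v.2.
exists (s, t); last by split.
rewrite inE; apply/asboolP.
have := hU _ (- (v.1 - rep hR n s), - (v.2 - rep hR n t)) hv (conj (dvdRN hs) (dvdRN ht)).
by rewrite /= !opprB ![v.1 + _]addrC ![v.2 + _]addrC !subrK.
Qed.

Lemma decode_inj : injective decode.
Proof. exact: can_inj decodeK. Qed.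

Lemma decode_stable S : diag_stable (decode S).
Proof.
move=> v w [p hp [h1 h2]] [w1 w2]; exists p => //.
by split; rewrite /= addrAC; apply: dvdRD.
Qed.

Lemma submod_stable U : submod U -> diag_lattice pi n n `<=` U -> diag_stable U.
Proof. by case=> _ hD _ hK v w hv /hK; apply: hD. Qed.

Lemma decode_diag_sub S : decode S (0, 0) -> diag_lattice pi n n `<=` decode S.
Proof. by move=> S0 w /(decode_stable S0); rewrite /= !add0r -surjective_pairing. Qed.

Definition code_preimage m (S : code) : code := encode (mx2_apply m @^-1` decode S).

Lemma decode_preimage m S : decode (code_preimage m S) = mx2_apply m @^-1` decode S.
Proof.
apply: encodeK => v w hv hw; rewrite /preimage /mkset mx2_applyD.
exact: decode_stable hv (mx2_apply_diag m hw).
Qed.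

Lemma code_preimageK m m' : mx2_inv m m' -> cancel (code_preimage m) (code_preimage m').
Proof.
by move=> mm' S; apply: decode_inj; rewrite !decode_preimage preimage_mx2K.
Qed.

Definition code_index (S : code) := index (decode S).

Definition supermod_code L (S : code) := fi_submod (decode S) /\ L `<=` decode S.

Lemma zeta_lambda_weight_count l1 l2 : (l1 <= n)%N -> (l2 <= n)%N ->
  zeta_lambda pi l1 l2 = weight_count (supermod_code (diag_lattice pi l1 l2)) code_index.
Proof.
move=> h1 h2; apply/funext => d; rewrite /zeta_lambda /weight_count.
have in_range : [set U | submod_M pi l1 l2 U /\ index_is U d] `<=` range decode.
  move=> U [/submod_M_diag [hU hK] _]; exists (encode U) => //; apply: encodeK.
  by apply: submod_stable hU _; apply: subset_trans hK; apply: diag_lattice_sub.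
rewrite (ncard_pcount decode_inj in_range).2; congr (_%:R); apply: eq_pcount => S /=.
rewrite submod_M_diag /code_index.
split=> [[[hS hK] hd]|[[[hS [k hk]] hK] <-]]; last by rewrite (indexE hS hk).
by split; [split=> //; split=> //; exists d|apply: indexE].
Qed.

Lemma supermod_code_preimage m m' L S : mx2_inv m m' ->
  supermod_code (mx2_apply m @^-1` L) (code_preimage m S) <-> supermod_code L S.
Proof.
move=> mm'; rewrite /supermod_code decode_preimage (fi_submod_preimage _ mm').
split=> -[hS hL]; split=> // v; last by move/hL.
by move/(_ (mx2_apply m' v)): hL; rewrite /preimage /mkset; case: mm' => _ ->.
Qed.

Lemma supercount_of_type l1 l2 L k m : of_type pi l1 l2 L ->
  (l1 <= n)%N -> (l2 <= n)%N -> (0 < m)%N ->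
  (tuple_count (supermod_code L) code_index k m)%:R =
  dpow (zeta_lambda pi l1 l2) k m.
Proof.
move=> [M [M' [MM' ->]]] h1 h2 m0.
rewrite (tuple_count_inj (h := code_preimage M) (w := code_index) (w' := code_index) k m _
  (fun S => supermod_code_preimage _ S MM')).
- by rewrite zeta_lambda_weight_count // dpow_weight_count // => S [/index_gt0].
- exact: can_inj (code_preimageK MM').
- by move=> S; rewrite /code_index decode_preimage (index_preimage _ MM').
Qed.

Lemma pcount_of_type l2 r : (l2 + r <= n)%N ->
  pcount (fun S : code => of_type pi (l2 + r) l2 (decode S)) = type_count q r.
Proof.
move=> hn; have stable L : of_type pi (l2 + r) l2 L -> diag_stable L.
  move=> tL; apply: submod_stable (of_type_submod tL) (of_type_diag_sub tL hn _).
  by apply: leq_trans hn; apply: leq_addr.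
case: r hn stable => [|r] hn stable /=.
  rewrite ?addn0 in stable *; rewrite -(pcount1 (encode (diag_lattice pi l2 l2))).
  apply: eq_pcount => S; split=> [/(of_type_eq_diag hR) <-|->]; first by rewrite decodeK.
  by rewrite encodeK; [apply: of_type_diag|exact: stable (of_type_diag _ _ _)].
have decode_line x : decode (encode (type_line hR l2 r.+1 x)) = type_line hR l2 r.+1 x.
  exact: encodeK (stable _ (type_line_of_type hR l2 x)).
have inj : injective (fun x => encode (type_line hR l2 r.+1 x)).
  by move=> x y /(congr1 decode); rewrite !decode_line; apply: type_line_inj.
have -> : (q ^ r.+1 + q ^ r = #|{: r.+1.-tuple 'I_q + r.-tuple 'I_q}|)%N.
  by rewrite card_sum !card_tuple card_ord.
rewrite -(card_imset _ inj); apply: eq_card => S; rewrite inE; apply/asboolP/imsetP.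
  by move/(type_line_surj hR (ltn0Sn r)) => [x ex]; exists x => //; rewrite -ex decodeK.
by move=> [x _ ->]; rewrite decode_line; apply: type_line_of_type.
Qed.

End Encoding.
Arguments decode_inj {R pi q} hR {n} [x1 x2].

Lemma star_arrowsP a (i j : 'I_a) :
  (((i : nat), (j : nat)) \in star_arrows a) = ((i : nat) == 0%N) && (0 < j)%N.
Proof.
rewrite /star_arrows; case: i => -[|i] hi /=; last by apply/mapP => -[x _ [e _]].
rewrite (mem_map (f := fun j => (0%N, j))); last by move=> x y [].
by rewrite mem_iota add1n prednK // ltn_ord andbT.
Qed.

Section StarRepresentations.
Variables (R : idomainType) (pi : R) (q : nat).
Hypothesis hR : is_compact_dvr pi q.
Variable N : nat.
Hypothesis N_gt0 : (0 < N)%N.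
Local Notation code := (code q N).
Local Notation decode := (@decode R pi q hR N).
Local Notation code_index := (@code_index R pi q hR N).
Local Notation supermod_code := (@supermod_code R pi q hR N).

Lemma subreps_of_indexP k (L : 'I_k.+1 -> set (R * R)) :
  subreps_of_index R k.+1 N L <->
  [/\ fi_submod (L ord0),
      forall j, fi_submod (L (lift ord0 j)) /\ L ord0 `<=` L (lift ord0 j)
    & (\prod_i index (L i))%N = N].
Proof.
have arrowP (i j : 'I_k.+1) : ((i : nat), (j : nat)) \in star_arrows k.+1 ->
    i = ord0 /\ exists j', j = lift ord0 j'.
  rewrite star_arrowsP => /andP [/eqP i0 j0]; split; first exact: val_inj.
  by case: (unliftP ord0 j) => [j' ->|e]; [exists j'|rewrite e in j0].
split=> [[[hL arrows] [ks [hks <-]]]|[L0 Lj <-]].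
  have fiL i : fi_submod (L i) by split; [|exists (ks i)].
  split=> // [j|]; first by split=> // v; apply: (arrows ord0); rewrite star_arrowsP.
  by apply: eq_bigr => i _; apply: indexE.
have fiL : forall i, fi_submod (L i) by apply/forall_ordS; split=> // j; case: (Lj j).
split.
  split=> [i|i j /arrowP [-> [j' ->]]]; first by case: (fiL i).
  exact: (Lj j').2.
exists (fun i => index (L i)); split=> // i.
by have [hL [ki hki]] := fiL i; rewrite (indexE hL hki).
Qed.

Lemma subreps_of_index_count k :
  finite_set (subreps_of_index R k.+1 N) /\
  ncard (subreps_of_index R k.+1 N) =
  (\sum_(S : code) (if `[< fi_submod (decode S) >] && (code_index S %| N)
     then tuple_count (supermod_code (decode S)) code_index k (N %/ code_index S)
     else 0))%N.
Proof.
pose dec (M : {ffun 'I_k.+1 -> code}) i := decode (M i).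
have dec_inj : injective dec.
  move=> M M' e; apply/ffunP => i; apply: (decode_inj hR).
  exact: (congr1 (fun f => f i) e).
have in_range : subreps_of_index R k.+1 N `<=` range dec.
  move=> L /subreps_of_indexP [L0 Lj prodN]; exists [ffun i => encode hR N (L i)] => //.
  apply/funext => i; rewrite /dec ffunE; have [hL [ki hki]] : fi_submod (L i).
    by move: i; apply/forall_ordS; split=> // j; case: (Lj j).
  apply: encodeK; apply: (submod_stable hL); apply: subset_trans (index_is_diag_sub hR hL hki).
  have le_N : (index (L i) <= N)%N.
    by rewrite -prodN; apply: dvdn_leq; [rewrite prodN|rewrite (bigD1 i) //= dvdn_mulr].
  by apply: diag_lattice_sub; rewrite -(indexE hL hki).
have [fin ->] := ncard_pcount dec_inj in_range.
split=> //; rewrite -pcount_star => [|S /index_gt0 //].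
by apply: eq_pcount => M; rewrite /= subreps_of_indexP.
Qed.

Lemma supercount_types k (S : code) :
  ((if `[< fi_submod (decode S) >] && (code_index S %| N)
    then tuple_count (supermod_code (decode S)) code_index k (N %/ code_index S)
    else 0)%N%:R : rat) =
  \sum_(l2 < N.+1) \sum_(r < N.+1)
    (if `[< of_type pi (l2 + r)%N l2 (decode S) >] && (q ^ (2 * l2 + r) %| N)%N
     then dpow (zeta_lambda pi (l2 + r)%N l2) k (N %/ q ^ (2 * l2 + r))%N
     else 0).
Proof.
have [fiS|nfiS] := asboolP (fi_submod (decode S)); last first.
  symmetry; apply: big1 => l2 _; apply: big1 => r _; case: asboolP => //= tS.
  case: nfiS; split; first exact: of_type_submod tS.
  by exists (q ^ (l2 + r) * q ^ l2)%N; exact: (of_type_index hR tS).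
have [hS _] := fiS; have [S0 _ _] := hS.
have [l1 [l2 [l21 l1N tS]]] := of_type_exists hR hS (decode_diag_sub S0).
have l1E : l1 = (l2 + (l1 - l2))%N by rewrite subnKC.
rewrite (@sum_ord2_pick _ _
  (fun i j => `[< of_type pi (i + j) i (decode S) >] && (q ^ (2 * i + j) %| N)%N)
  (fun i j => dpow (zeta_lambda pi (i + j) i) k (N %/ q ^ (2 * i + j))%N)
  l2 (l1 - l2)); first last.
- move=> i j /andP [/asboolP tS' _].
  have [e1 e2] := of_type_uniq hR tS tS' l21 (leq_addr _ _).
  by rewrite e1 e2 addKn.
- by rewrite ltnS (leq_trans (leq_subr _ _)).
- by rewrite ltnS (leq_trans l21).
rewrite -l1E /code_index (indexE hS (of_type_index hR tS)) -expnD.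
have -> : (l1 + l2 = 2 * l2 + (l1 - l2))%N by lia.
have -> : `[< of_type pi l1 l2 (decode S) >] by apply/asboolP.
case: ifP => //= hd; rewrite (supercount_of_type hR k tS) //; first exact: leq_trans l21 l1N.
by rewrite divn_gt0 ?expn_gt0 ?(ltnW (q_gt1 hR)) // dvdn_leq.
Qed.

Lemma sum_types_count (E : nat -> nat -> rat) :
  \sum_(S : code) \sum_(l2 < N.+1) \sum_(r < N.+1)
    (if `[< of_type pi (l2 + r)%N l2 (decode S) >] && (q ^ (2 * l2 + r) %| N)%N
     then E l2 r else 0) =
  \sum_(l2 < N.+1) \sum_(r < N.+1)
    (if (q ^ (2 * l2 + r) %| N)%N then E l2 r * (type_count q r)%:R else 0).
Proof.
rewrite exchange_big; apply: eq_bigr => l2 _; rewrite exchange_big; apply: eq_bigr => r _.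
case: ifP => hd; last by apply: big1 => S _; rewrite andbF.
have l2rN : (l2 + r <= N)%N.
  by have := ltn_expl (2 * l2 + r) (q_gt1 hR); have := dvdn_leq N_gt0 hd; lia.
rewrite -(pcount_of_type hR l2rN) pcount_sum natr_sum mulr_sumr.
by apply: eq_bigr => S _; rewrite andbT; case: asboolP; rewrite ?mulr1 ?mulr0.
Qed.

End StarRepresentations.

Lemma dmul_dmono (c : rat) m0 g M : (0 < M)%N ->
  dmul (dmono c m0) g M = if (m0 %| M)%N then c * g (M %/ m0)%N else 0.
Proof.
move=> M0; rewrite /dmul /dmono; case: ifP => hd; last first.
  by apply: big1 => d dM; rewrite ifN ?mul0r //; apply: contraFneq hd => <-.
have m0M : (m0 < M.+1)%N by rewrite ltnS dvdn_leq.
rewrite (bigD1 (Ordinal m0M)) //= eqxx big1 ?addr0 // => d /andP [_ dm0].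
by rewrite ifN ?mul0r //; apply: contraNneq dm0 => e; apply/eqP/val_inj.
Qed.

Lemma natr_type_count q r : (0 < q)%N -> (0 < r)%N ->
  ((type_count q r)%:R : rat) = (1 + q%:R^-1) * (q ^ r)%:R.
Proof.
move=> q0; case: r => // r _; have qn0 : (q%:R : rat) != 0 by rewrite pnatr_eq0 -lt0n.
by rewrite /= natrD !natrX exprS mulrDl mul1r mulrA mulVf // mul1r.
Qed.

Lemma sum_dvd_pexp q N N' (G : nat -> rat) : (1 < q)%N -> (0 < N')%N -> (N' <= N)%N ->
  \sum_(i < N) (if (q ^ i.+1 %| N')%N then G i.+1 else 0) =
  \sum_(1 <= r < N'.+1) (if (q ^ r %| N')%N then G r else 0).
Proof.
move=> q1 N'0 N'N.
rewrite -(big_mkord xpredT (fun i => if (q ^ i.+1 %| N')%N then G i.+1 else 0)).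
rewrite big_add1 /= (big_cat_nat _ (n := N')) //= [X in _ + X]big1_seq ?addr0 // => i.
rewrite mem_index_iota => /andP [_ /andP [N'i _]]; case: ifP => // /(dvdn_leq N'0).
by have := ltn_expl i.+1 q1; lia.
Qed.

Lemma dsum_types (f : nat -> nat -> dseries) q N : (1 < q)%N -> (0 < N)%N ->
  dsum_from 0 (fun r0 =>
    dmul (tpow q (2 * r0))
      (dadd (f r0 r0)
            (dscale (1 + (q%:R)^-1)
               (dsum_from 1 (fun r1 => dmul (qtpow q r1) (f (r0 + r1) r0)))))) N =
  \sum_(l2 < N.+1) \sum_(r < N.+1)
    (if (q ^ (2 * l2 + r) %| N)%N
     then f (l2 + r)%N l2 (N %/ q ^ (2 * l2 + r))%N * (type_count q r)%:R else 0).
Proof.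
move=> q1 N0; have q0 := ltnW q1.
rewrite /dsum_from big_mkord; apply: eq_bigr => l2 _; rewrite /tpow dmul_dmono // mul1r.
case: (boolP (q ^ (2 * l2) %| N)%N) => hd; last first.
  apply/esym/big1 => r _; case: ifP => // hr; case/negP: hd.
  by apply: dvdn_trans hr; rewrite expnD dvdn_mulr.
set N' := (N %/ q ^ (2 * l2))%N.
have N'0 : (0 < N')%N by rewrite divn_gt0 ?expn_gt0 ?q0 // dvdn_leq.
have dvdE s : (q ^ (2 * l2 + s) %| N)%N = (q ^ s %| N')%N.
  by rewrite dvdn_divRL // -expnD addnC.
have divE s : (N %/ q ^ (2 * l2 + s))%N = (N' %/ q ^ s)%N by rewrite expnD divnMA.
rewrite big_ord_recl [X in _ = X + _]/= dvdE divE expn0 dvd1n divn1 addn0 mulr1.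
congr (_ + _); under [RHS]eq_bigr => i _ do rewrite lift0 dvdE divE.
rewrite /dscale (sum_dvd_pexp
  (fun r => f (l2 + r)%N l2 (N' %/ q ^ r)%N * (type_count q r)%:R) q1 N'0 (leq_div _ _)).
rewrite mulr_sumr; apply: eq_big_nat => r /andP [r0 _]; rewrite /qtpow dmul_dmono //.
by case: ifP => _; rewrite ?mulr0 // natr_type_count // mulrA mulrC.
Qed.

Unset Implicit Arguments.

Theorem proposition3p6 (R : idomainType) (pi : R) (q a : nat)
  (hR : is_compact_dvr pi q) (ha : (0 < a)%N) :
  forall N : nat, (0 < N)%N ->
    finite_set (subreps_of_index R a N) /\
    zeta_V2a R a N =
    dsum_from 0 (fun r0 =>
      dmul (tpow q (2 * r0))
        (dadd (dpow (zeta_lambda pi r0 r0) a.-1)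
              (dscale (1 + (q%:R)^-1)
                 (dsum_from 1 (fun r1 =>
                    dmul (qtpow q r1) (dpow (zeta_lambda pi (r0 + r1) r0) a.-1)))))) N.
Proof.
move=> N N_gt0; case: a ha => [//|k] _ /=.
have [fin card] := subreps_of_index_count hR N_gt0 k.
split=> //; rewrite /zeta_V2a card natr_sum.
rewrite (eq_bigr _ (fun S _ => supercount_types hR N_gt0 k S)).
rewrite (sum_types_count hR N_gt0
  (fun l2 r => dpow (zeta_lambda pi (l2 + r)%N l2) k (N %/ q ^ (2 * l2 + r))%N)).
by rewrite (dsum_types (fun l1 l2 => dpow (zeta_lambda pi l1 l2) k) (q_gt1 hR) N_gt0).
Qed.
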